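(* Let $N\ge1$, $k>0$, $\gamma>0$, and let all $N$ channels have the same SNR $\gamma$. Define $\bar\Delta^*_{\mathrm{CS}}=\inf_{n>0}\bar\Delta_{\mathrm{CS}}(n)$, $\bar\Delta^*_{\mathrm{MP}}=\inf_{n>0}\left[\frac{n(1+\epsilon_{\mathrm{SC}}(n))}{2N(1-\epsilon_{\mathrm{SC}}(n))}+n\right]$, and $\bar\Delta^*_{\mathrm{PD}}=\inf_{n>0}\bar\Delta_{\mathrm{PD}}(n)$. Then $$\bar\Delta^*_{\mathrm{CS}}\le\bar\Delta^*_{\mathrm{MP}}\le\bar\Delta^*_{\mathrm{PD}}.$$
   Context: Let $Q(x)=\frac{1}{\sqrt{2\pi}}\int_x^\infty e^{-t^2/2}dt$ and for blocklength $n>0$, message size $k$ bits and SNR $\gamma>0$ let $\epsilon(n,k,\gamma)=Q\!\left(\frac{\frac12\log_2(1+\gamma)-\frac kn}{\log_2(e)\sqrt{\frac{1}{2n}\left(1-\frac{1}{(1+\gamma)^2}\right)}}\right)$ (variables treated as continuous). With $N$ channels of common SNR $\gamma$: single-channel error $\epsilon_{\mathrm{SC}}(n)=\epsilon(n,k,\gamma)$; packet duplication error $\epsilon_{\mathrm{PD}}(n)=\epsilon(n,k,\gamma)^N$; codeword splitting error (one codeword split into $N$ fragments of length $n$ sent in parallel) $\epsilon_{\mathrm{CS}}(n)=Q\!\left(\frac{\sum_{i=1}^N\frac12\log_2(1+\gamma)-\frac kn}{\log_2(e)\sqrt{\frac{1}{2n}\sum_{i=1}^N\left(1-\frac{1}{(1+\gamma)^2}\right)}}\right)$.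 For $\chi\in\{\mathrm{PD},\mathrm{CS}\}$, $\bar\Delta_\chi(n)=\frac{n(1+\epsilon_\chi(n))}{2(1-\epsilon_\chi(n))}+n$, the time-average Age of Information of the scheme that every $n$ time units generates a fresh update and delivers it $n$ time units later, successfully with probability $1-\epsilon_\chi(n)$ independently. The expression $\frac{n(1+\epsilon_{\mathrm{SC}}(n))}{2N(1-\epsilon_{\mathrm{SC}}(n))}+n$ is the time-average AoI of the multiplexing scheme (each of the $N$ channels periodically sends a fresh update with blocklength $n$, with offsets $\delta_i=in/N$) with optimal offsets. *)

From Stdlib Require Import Reals.
From Coquelicot Require Import Coquelicot.
Open Scope R_scope.

Definition Qf (x : R) : R :=
  / sqrt (2 * PI) *
  RInt_gen (fun t => exp (- t ^ 2 / 2)) (at_point x) (Rbar_locally p_infty).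

Definition log2 (x : R) : R := ln x / ln 2.
Definition log2e : R := / ln 2.

(* normal-approximation error for blocklength n, k bits, SNR g *)
Definition eps (n k g : R) : R :=
  Qf ((/2 * log2 (1 + g) - k / n) /
      (log2e * sqrt (/ (2 * n) * (1 - / (1 + g) ^ 2)))).

Definition eps_SC (k g n : R) : R := eps n k g.
Definition eps_PD (N : nat) (k g n : R) : R := (eps n k g) ^ N.

(* codeword splitting over channels 0..N-1 with SNRs gs i *)
Definition eps_CS (N : nat) (k : R) (gs : nat -> R) (n : R) : R :=
  Qf ((sum_n (fun i => /2 * log2 (1 + gs i)) (N - 1) - k / n) /
      (log2e * sqrt (/ (2 * n) * sum_n (fun i => 1 - / (1 + gs i) ^ 2) (N - 1)))).

(* time-average AoI for success probability 1 - e *)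
Definition aoi (n e : R) : R := n * (1 + e) / (2 * (1 - e)) + n.

Definition aoi_MP (N : nat) (k g n : R) : R :=
  n * (1 + eps_SC k g n) / (2 * INR N * (1 - eps_SC k g n)) + n.

Definition inf_pos (f : R -> R) : Rbar :=
  Glb_Rbar (fun y => exists n, 0 < n /\ y = f n).

Definition aoi_CS_opt (N : nat) (k g : R) : Rbar :=
  inf_pos (fun n => aoi n (eps_CS N k (fun _ => g) n)).
Definition aoi_MP_opt (N : nat) (k g : R) : Rbar :=
  inf_pos (fun n => aoi_MP N k g n).
Definition aoi_PD_opt (N : nat) (k g : R) : Rbar :=
  inf_pos (fun n => aoi n (eps_PD N k g n)).

(* Splitting one codeword into N fragments of length n/N gives exactly the
   single-channel error at blocklength n, since the N identical channels add up
   the mean and the variance of the information density; with that error, the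
   codeword-splitting AoI at n/N is below the multiplexing AoI at n.
   Multiplexing in turn beats duplication at the same blocklength because
   (1 + e) (1 - e^N) <= N (1 - e) (1 + e^N) for 0 <= e <= 1.  Both comparisons
   need the error to lie in [0, 1), i.e. Q < 1, which rests on the value
   sqrt pi of the Gaussian integral (MathComp-Analysis), transferred to a
   Riemann integral by the fundamental theorem of calculus. *)

From Stdlib Require Import Reals Lra Lia Classical.
From Coquelicot Require Import Coquelicot.
From mathcomp Require all_boot all_order all_algebra all_classical all_reals all_analysis measurable_realfun Rstruct Rstruct_topology.

Module GaussIntegral.
Import all_boot all_order all_algebra all_classical all_reals all_analysis measurable_realfun Rstruct Rstruct_topology.
Import Order.TTheory GRing.Theory Num.Theory numFieldNormedType.Exports.
Local Open Scope classical_set_scope.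
Local Open Scope ring_scope.
(* Stdlib's [R], seen as a MathComp [realType]. *)
Local Notation RR := (Real.sort RbaseSymbolsImpl_R__canonical__reals_Real).

Lemma RcosE (x : R) : Rtrigo_def.cos x = trigo.cos x.
Proof.
rewrite /Rtrigo_def.cos; case: exist_cos => y cos_ub.
have cvg_y : series (cos_coeff' x) @ \oo --> y.
  rewrite -cvg_shiftS /=; apply/(@cvgrPdist_lt _ R^o) => /= e /RltP /cos_ub[N Nub].
  near=> n.
  have nN : (n >= N)%coq_nat by apply/ssrnat.leP; near: n; exact: nbhs_infty_ge.
  move: Nub => /(_ _ nN) /[!RdistE] /RltP /=.
  rewrite distrC sum_f_R0E; congr (`| _ - _ | < e).
  apply: eq_bigr=> k _; rewrite /cos_coeff' /cos_n RdivE RpowE INRE factE.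
  rewrite /Rsqr !RpowE !RmultE -expr2 -exprM exprnP.
  rewrite (_ : (2 * k)%coq_nat = k.*2); last by rewrite -mul2n.
  by rewrite mulrAC mul2n.
exact: (cvg_unique (@Rhausdorff R) cvg_y (@cvg_cos_coeff' R x)).
Unshelve. all: by end_near. Qed.

(* MathComp's [pi] and Stdlib's [PI] are defined independently; they are
   compared through [cos], identified by its power series in [RcosE]. *)
Lemma pi_le_PI : (pi : R) <= PI.
Proof.
have PI_gt0 : (0 : R) < PI by apply/RltP; exact: PI_RGT_0.
have two_E : (2%coqR : R) = 2 by rewrite IZRposE INRE.
rewrite leNgt; apply/negP => PI_lt_pi.
have : 0 < trigo.cos (PI / 2 : R).
  rewrite RdivE two_E; apply: cos_gt0_pihalf; apply/andP; split.
    by apply: (@lt_trans _ _ 0); rewrite ?oppr_lt0 divr_gt0 ?pi_gt0.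
  by rewrite ltr_pM2r.
by rewrite -RcosE cos_PI2 ltxx.
Qed.

Lemma derivable_pt_lim_is_derive (f : RR -> RR) (x l : RR) :
  derivable_pt_lim f x l -> is_derive x (1 : RR) f l.
Proof.
move=> f'x.
have cvg_quot : (fun h : RR => h^-1 *: ((f \o shift x) (h *: (1 : RR)) - f x)) @ 0^' --> l.
  apply/(@cvgrPdist_lt _ R^o) => e /RltP e0.
  have [[d /= /RltP d0] near_x] := f'x e e0.
  rewrite near_withinE; exists d => //= h /= hd /eqP h0.
  have /RltP := near_x h h0 ltac:(by apply/RltP; rewrite RabsE -normrN -[X in `|X|]add0r).
  rewrite RabsE RdivE RminusE distrC (_ : h%:A = h :> RR); last by rewrite -[RHS]mulr1.
  by rewrite [h + x]addrC /= mulrC.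
by split; [apply/cvg_ex; exists l | exact: cvg_lim cvg_quot].
Qed.

Lemma gauss_primitive_increment_le (F : RR -> RR) (a b : RR) :
  (forall x, derivable_pt_lim F x (Rtrigo_def.exp (- x ^ 2))) ->
  (a < b)%coqR -> (F b - F a <= sqrt PI)%coqR.
Proof.
move=> F' /RltP ab; apply/RleP; rewrite RsqrtE RminusE.
have dF x : is_derive x (1 : RR) F (gauss_fun x).
  by have := derivable_pt_lim_is_derive _ _ _ (F' x); rewrite RexpE RoppE RpowE.
have cF x : {for x, continuous F}.
  by apply: differentiable_continuous; apply/derivable1_diffP; case: (dF x).
rewrite -lee_fin.
have -> : ((F b - F a)%:E = \int[lebesgue_measure]_(x in `[a, b]) (gauss_fun x)%:E)%E.
  rewrite EFinB; apply/esym/continuous_FTC2 => //.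
  - by apply: continuous_subspaceT; exact: continuous_gauss_fun.
  - split; first by move=> x _; case: (dF x).
    + exact: cvg_at_right_filter (cF a).
    + exact: cvg_at_left_filter (cF b).
  - by move=> x _; rewrite derive1E; case: (dF x).
apply: (@le_trans _ _ (\int[lebesgue_measure]_x (gauss_fun x)%:E)%E).
  apply: ge0_subset_integral => //=.
  - by apply/measurable_EFinP; exact: measurable_gauss_fun.
  - by move=> x _; rewrite lee_fin gauss_fun_ge0.
rewrite integralT_gauss lee_fin ler_sqrt ?pi_le_PI//.
by apply/RleP; apply: Rlt_le; exact: PI_RGT_0.
Qed.

End GaussIntegral.

Open Scope R_scope.

Definition gauss (t : R) : R := exp (- t ^ 2).
Definition gauss_half (t : R) : R := exp (- t ^ 2 / 2).

Lemma continuous_gauss (x : R) : continuous gauss x.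
Proof. apply (ex_derive_continuous gauss); unfold gauss; auto_derive; trivial. Qed.

Lemma continuous_gauss_half (x : R) : continuous gauss_half x.
Proof. apply (ex_derive_continuous gauss_half); unfold gauss_half; auto_derive; trivial. Qed.

Lemma ex_RInt_continuous_R (f : R -> R) (a b : R) :
  (forall x, continuous f x) -> ex_RInt f a b.
Proof. intros Cf; apply (ex_RInt_continuous (V := R_CompleteNormedModule)); intros z _; apply Cf. Qed.

Lemma RInt_gauss_le (a b : R) : a < b -> RInt gauss a b <= sqrt PI.
Proof.
intros ab.
assert (Iab : RInt gauss a b = RInt gauss 0 b - RInt gauss 0 a).
{ assert (Chasles : RInt gauss 0 a + RInt gauss a b = RInt gauss 0 b)
    by (apply (RInt_Chasles gauss); apply ex_RInt_continuous_R, continuous_gauss).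
  lra. }
rewrite Iab; apply (GaussIntegral.gauss_primitive_increment_le (fun x => RInt gauss 0 x)); auto.
intros x; apply is_derive_Reals, (is_derive_RInt gauss _ 0 x), continuous_gauss.
apply filter_forall; intros y.
apply (RInt_correct (V := R_CompleteNormedModule)), ex_RInt_continuous_R, continuous_gauss.
Qed.

Lemma gauss_half_sqrt2 (y : R) : gauss_half (sqrt 2 * y) = gauss y.
Proof.
unfold gauss_half, gauss; f_equal.
rewrite Rpow_mult_distr, pow2_sqrt by lra; field.
Qed.

Lemma RInt_gauss_half_le (a b : R) : a < b -> RInt gauss_half a b <= sqrt (2 * PI).
Proof.
intros ab.
assert (s2 : 0 < sqrt 2) by (apply sqrt_lt_R0; lra).
assert (Iab : RInt gauss_half a b = sqrt 2 * RInt gauss (a / sqrt 2) (b / sqrt 2)).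
{ assert (Subst := RInt_comp_lin gauss_half (sqrt 2) 0 (a / sqrt 2) (b / sqrt 2)
    (ex_RInt_continuous_R _ _ _ continuous_gauss_half)).
  replace (sqrt 2 * (a / sqrt 2) + 0) with a in Subst by (field; lra).
  replace (sqrt 2 * (b / sqrt 2) + 0) with b in Subst by (field; lra).
  rewrite <- Subst, <- (RInt_scal gauss) by apply ex_RInt_continuous_R, continuous_gauss.
  apply RInt_ext; intros y _.
  rewrite Rplus_0_r, gauss_half_sqrt2; reflexivity. }
rewrite Iab, sqrt_mult by (generalize PI_RGT_0; lra).
apply Rmult_le_compat_l, RInt_gauss_le; [lra |].
apply Rmult_lt_compat_r; [apply Rinv_0_lt_compat |]; lra.
Qed.

Section ImproperIntegral.

Variables (f : R -> R) (a : R).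
Hypothesis f_cont : forall x, continuous f x.
Hypothesis f_ge0 : forall x, 0 <= f x.

Lemma RInt_nonneg_le_mono (b0 b : R) : a <= b0 -> b0 <= b -> RInt f a b0 <= RInt f a b.
Proof.
intros ab0 b0b.
assert (Chasles : RInt f a b0 + RInt f b0 b = RInt f a b)
  by (apply (RInt_Chasles f); apply ex_RInt_continuous_R, f_cont).
assert (0 <= RInt f b0 b).
{ apply RInt_ge_0; auto. apply ex_RInt_continuous_R, f_cont. }
lra.
Qed.

Lemma is_RInt_gen_pinfty_lub (l : R) :
  is_lub (fun y => exists b, a <= b /\ y = RInt f a b) l ->
  is_RInt_gen f (at_point a) (Rbar_locally p_infty) l.
Proof.
intros [l_ub l_least] P [eps near_l].
assert (Hb0 : exists b0, a <= b0 /\ l - eps < RInt f a b0).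
{ destruct (classic (exists b0, a <= b0 /\ l - eps < RInt f a b0)) as [Hb0 | Hno]; auto.
  assert (l <= l - eps); [| destruct eps; simpl in *; lra].
  apply l_least; intros y [b [ab ->]].
  apply Rnot_lt_le; intros lt; apply Hno; exists b; auto. }
destruct Hb0 as [b0 [ab0 close_b0]].
apply (Filter_prod _ _ _ (fun u => u = a) (fun b => Rmax a b0 < b));
  [reflexivity | exists (Rmax a b0); auto |].
intros u b -> Hb; simpl.
assert (ab : a <= b) by (generalize (Rmax_l a b0); lra).
assert (b0b : b0 <= b) by (generalize (Rmax_r a b0); lra).
exists (RInt f a b); split.
- apply (RInt_correct (V := R_CompleteNormedModule)), ex_RInt_continuous_R, f_cont.
- apply near_l.
  assert (RInt f a b <= l) by (apply l_ub; exists b; auto).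
  assert (RInt f a b0 <= RInt f a b) by (apply RInt_nonneg_le_mono; auto).
  apply Rabs_def1; unfold minus, plus, opp; simpl; lra.
Qed.

Lemma RInt_gen_pinfty_bounds (M : R) :
  (forall b, a <= b -> RInt f a b <= M) ->
  0 <= RInt_gen f (at_point a) (Rbar_locally p_infty) <= M.
Proof.
intros le_M.
destruct (completeness (fun y => exists b, a <= b /\ y = RInt f a b)) as [l lub_l].
- exists M; intros y [b [ab ->]]; auto.
- exists (RInt f a a); exists a; split; [lra | reflexivity].
- rewrite (is_RInt_gen_unique f l (is_RInt_gen_pinfty_lub l lub_l)).
  destruct lub_l as [l_ub l_least]; split.
  + replace 0 with (RInt f a a) by (rewrite RInt_point; reflexivity).
    apply l_ub; exists a; split; [lra | reflexivity].
  + apply l_least; intros y [b [ab ->]]; auto.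
Qed.

End ImproperIntegral.

Lemma Qf_bounds (x : R) : 0 <= Qf x < 1.
Proof.
set (S := sqrt (2 * PI)).
assert (S_pos : 0 < S) by (apply sqrt_lt_R0; generalize PI_RGT_0; lra).
(* The mass [c] on [[x - 1, x]] keeps the tail strictly below the full integral. *)
set (c := RInt gauss_half (x - 1) x).
assert (c_pos : 0 < c).
{ apply RInt_gt_0; [lra | intros; apply exp_pos | intros; apply continuous_gauss_half]. }
assert (tail : 0 <= RInt_gen gauss_half (at_point x) (Rbar_locally p_infty) <= S - c).
{ apply RInt_gen_pinfty_bounds; [apply continuous_gauss_half | intros; left; apply exp_pos |].
  intros b xb.
  assert (Chasles : c + RInt gauss_half x b = RInt gauss_half (x - 1) b)
    by (apply (RInt_Chasles gauss_half); apply ex_RInt_continuous_R, continuous_gauss_half).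
  assert (RInt gauss_half (x - 1) b <= S) by (apply RInt_gauss_half_le; lra).
  lra. }
unfold Qf; fold S; change (fun t => exp (- t ^ 2 / 2)) with gauss_half.
assert (/ S * (S - c) = 1 - c / S) by (field; lra).
assert (0 < c / S) by (apply Rdiv_lt_0_compat; auto).
assert (0 < / S) by (apply Rinv_0_lt_compat; auto).
split; [apply Rmult_le_pos |]; nra.
Qed.

Lemma eps_bounds (n k g : R) : 0 <= eps n k g < 1.
Proof. apply Qf_bounds. Qed.

Lemma eps_CS_const (N : nat) (k g n : R) : (1 <= N)%nat -> 0 < n -> 0 < g ->
  eps_CS N k (fun _ => g) (n / INR N) = eps_SC k g n.
Proof.
intros HN Hn Hg.
assert (HNr : 1 <= INR N) by (apply (le_INR 1); exact HN).
unfold eps_CS, eps_SC, eps; rewrite !sum_n_const.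
replace (S (N - 1)) with N by lia.
f_equal.
set (V := 1 - / (1 + g) ^ 2).
assert (V_pos : 0 < V).
{ assert (/ (1 + g) ^ 2 < 1) by (rewrite <- Rinv_1; apply Rinv_lt_contravar; nra).
  unfold V; lra. }
assert (var_pos : 0 < / (2 * n) * V)
  by (apply Rmult_lt_0_compat; [apply Rinv_0_lt_compat |]; lra).
replace (/ (2 * (n / INR N)) * (INR N * V)) with ((INR N * INR N) * (/ (2 * n) * V))
  by (field; lra).
rewrite sqrt_mult, sqrt_square by (try apply Rle_0_sqr; lra).
assert (0 < sqrt (/ (2 * n) * V)) by (apply sqrt_lt_R0; auto).
assert (log2e <> 0) by (apply Rinv_neq_0_compat; generalize ln_lt_2; lra).
field; repeat split; lra.
Qed.

Lemma inf_pos_le (f h : R -> R) :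
  (forall n, 0 < n -> exists m, 0 < m /\ f m <= h n) ->
  Rbar_le (inf_pos f) (inf_pos h).
Proof.
intros dominated; unfold inf_pos.
destruct (Glb_Rbar_correct (fun y => exists n, 0 < n /\ y = f n)) as [lb_f _].
destruct (Glb_Rbar_correct (fun y => exists n, 0 < n /\ y = h n)) as [_ glb_h].
apply glb_h; intros y [n [Hn ->]].
destruct (dominated n Hn) as [m [Hm le_m]].
apply Rbar_le_trans with (Finite (f m)); [apply lb_f; exists m; auto | exact le_m].
Qed.

Lemma one_sub_pow_ge (e : R) (N : nat) : 0 <= e <= 1 -> INR N * e ^ N * (1 - e) <= 1 - e ^ N.
Proof.
intros He; induction N as [|N IH]; [simpl; lra |].
rewrite S_INR; simpl.
assert (0 <= e ^ N) by (apply pow_le; lra).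
assert (0 <= INR N) by apply pos_INR.
assert (0 <= (INR N + 1) * (1 - e) * (e ^ N - e * e ^ N)) by (apply Rmult_le_pos; nra).
nra.
Qed.

Lemma one_sub_pow_le (e : R) (N : nat) : 0 <= e <= 1 -> (1 <= N)%nat ->
  (1 + e) * (1 - e ^ N) <= INR N * (1 - e) * (1 + e ^ N).
Proof.
intros He HN; induction HN as [|N HN IH]; [simpl; lra |].
rewrite S_INR; simpl.
assert (0 <= e ^ N) by (apply pow_le; lra).
assert (Hpow := one_sub_pow_ge e N He).
nra.
Qed.

Lemma aoi_div_le (N : nat) (n e : R) : (1 <= N)%nat -> 0 <= n -> 0 <= e < 1 ->
  aoi (n / INR N) e <= n * (1 + e) / (2 * INR N * (1 - e)) + n.
Proof.
intros HN Hn He; unfold aoi.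
assert (HNr : 1 <= INR N) by (apply (le_INR 1); exact HN).
replace (n / INR N * (1 + e) / (2 * (1 - e))) with (n * (1 + e) / (2 * INR N * (1 - e)))
  by (field; lra).
assert (n / INR N <= n).
{ apply Rmult_le_reg_r with (INR N); [lra |].
  unfold Rdiv; rewrite Rmult_assoc, Rinv_l; nra. }
lra.
Qed.

Lemma aoi_pow_ge (N : nat) (n e : R) : (1 <= N)%nat -> 0 <= n -> 0 <= e < 1 ->
  n * (1 + e) / (2 * INR N * (1 - e)) + n <= aoi n (e ^ N).
Proof.
intros HN Hn He; unfold aoi.
assert (HNr : 1 <= INR N) by (apply (le_INR 1); exact HN).
assert (HeN : 0 <= e ^ N < 1) by (apply pow_lt_1_compat; [lra | lia]).
assert (key := one_sub_pow_le e N ltac:(lra) HN).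
apply Rplus_le_compat_r.
set (D := 2 * INR N * (1 - e) * (1 - e ^ N)).
assert (D_pos : 0 < D).
{ unfold D; repeat apply Rmult_lt_0_compat; lra. }
apply Rmult_le_reg_r with D; [exact D_pos |].
replace (n * (1 + e) / (2 * INR N * (1 - e)) * D) with (n * ((1 + e) * (1 - e ^ N)))
  by (unfold D; field; lra).
replace (n * (1 + e ^ N) / (2 * (1 - e ^ N)) * D) with (n * (INR N * (1 - e) * (1 + e ^ N)))
  by (unfold D; field; lra).
apply Rmult_le_compat_l; assumption.
Qed.

Theorem theorem2 (N : nat) (k gamma : R) :
  (1 <= N)%nat -> 0 < k -> 0 < gamma ->
  Rbar_le (aoi_CS_opt N k gamma) (aoi_MP_opt N k gamma) /\
  Rbar_le (aoi_MP_opt N k gamma) (aoi_PD_opt N k gamma).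
Proof.
intros HN _ Hg.
assert (HNr : 0 < INR N) by (apply lt_0_INR; lia).
split; apply inf_pos_le; intros n Hn.
- exists (n / INR N); split; [apply Rdiv_lt_0_compat; lra |].
  rewrite eps_CS_const by assumption.
  apply aoi_div_le; [assumption | lra | apply eps_bounds].
- exists n; split; [exact Hn |].
  apply aoi_pow_ge; [assumption | lra | apply eps_bounds].
Qed.
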